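(* Let $\mathbf{\Pi}=\langle\mathit{PF},\Pi\rangle$ be a multi-valued probabilistic program such that $\mathrm{SM}''[\mathbf{\Pi}]$ is not empty and $M_{\mathbf{\Pi}}(c=v)>0$ for every probabilistic constant $c$ and every $v\in\mathrm{Dom}(c)$. Then for every interpretation $I$, $I$ is a (probabilistic) stable model of $T(\mathbf{\Pi})$ if and only if $I\in\mathrm{SM}''[\mathbf{\Pi}]$.
   Context: Stable model semantics: a rule is $A\leftarrow B\wedge N$ ($A$ a possibly empty disjunction of atoms, $B$ a conjunction of atoms, $N$ a formula with every atom occurrence under negation); the reduct $\Pi^I$ of a ground program keeps $A\leftarrow B$ for rules with $I\models N$; $I$ (a set of atoms) is a stable model if it is a minimal model of $\Pi^I$. An $\mathrm{LP}^{\mathrm{MLN}}$ program $\Pi$ is a finite set of weighted rules $w:R$, $w$ real or the symbol $\alpha$; $\Pi_I=\{w:R\in\Pi\mid I\models R\}$; $\mathrm{SM}[\Pi]=\{I\mid I$ stable model of the unweighted $\Pi_I\}$; with $\alpha$ a real parameter, $W_\Pi(I)=\exp(\sum_{w:R\in\Pi_I}w)$ if $I\in\mathrm{SM}[\Pi]$, else $0$; $P_\Pi(I)=\lim_{\alpha\to\infty}W_\Pi(I)/\sum_{J\in\mathrm{SM}[\Pi]}W_\Pi(J)$; $I$ is a (probabilistic) stable model of $\Pi$ if $P_\Pi(I)\neq0$. Multi-valued signature: constants $c$ with finite domains $\mathrm{Dom}(c)$; atoms $c=v$; constants are probabilistic or regular. A multi-valued probabilistic program $\mathbf{\Pi}=\langle\mathit{PF},\Pi\rangle$: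 $\mathit{PF}$ has, for each probabilistic constant $c$, one declaration $p_1:c=v_1\mid\dots\mid p_n:c=v_n$ ($\{v_i\}=\mathrm{Dom}(c)$ distinct, $p_i\in[0,1]$, $\sum p_i=1$), and $M_{\mathbf{\Pi}}(c=v_i)=p_i$; $\Pi$ is a set of rules whose heads contain no atom of a probabilistic constant. $T(\mathbf{\Pi})$ is the $\mathrm{LP}^{\mathrm{MLN}}$ program containing: $\ln(p_i):c=v_i$ if $0<p_i<1$, $\alpha:c=v_i$ if $p_i=1$, $\alpha:\bot\leftarrow c=v_i$ if $p_i=0$; $\alpha:R$ for $R\in\Pi$; $\alpha:\bot\leftarrow c=v_1\wedge c=v_2$ for every constant $c$ and distinct $v_1,v_2\in\mathrm{Dom}(c)$; $\alpha:\bot\leftarrow\neg\bigvee_{v\in\mathrm{Dom}(c)}c=v$ for every probabilistic $c$. $I$ is consistent if it satisfies the last two kinds of constraints; $\mathit{TC}(I)=\{c=v\in I\mid c$ probabilistic$\}$; $\mathrm{SM}''[\mathbf{\Pi}]$ is the set of consistent $I$ that are stable models of $\Pi\cup\mathit{TC}(I)$. *)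

From HB Require Import structures.
From mathcomp Require Import all_boot all_order all_algebra.
From mathcomp Require Import all_classical all_reals all_analysis.
Set Implicit Arguments. Unset Strict Implicit. Unset Printing Implicit Defensive.
Import Order.TTheory GRing.Theory Num.Theory.
Import numFieldNormedType.Exports.
Local Open Scope classical_set_scope.
Local Open Scope ring_scope.

Inductive formula (A : Type) :=
| Fatom of A
| Ftrue
| Ffalse
| Fneg of formula A
| Fand of formula A & formula A
| For of formula A & formula A
| Fimp of formula A & formula A.
Arguments Ftrue {A}. Arguments Ffalse {A}.

Section FormulaEq.
Variable A : eqType.
Fixpoint eqf (f g : formula A) : bool :=
  match f, g with
  | Fatom a, Fatom b => a == b
  | Ftrue, Ftrue => true
  | Ffalse, Ffalse => true
  | Fneg f, Fneg g => eqf f g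
  | Fand f1 f2, Fand g1 g2 => eqf f1 g1 && eqf f2 g2
  | For f1 f2, For g1 g2 => eqf f1 g1 && eqf f2 g2
  | Fimp f1 f2, Fimp g1 g2 => eqf f1 g1 && eqf f2 g2
  | _, _ => false
  end.
Lemma eqfP : Equality.axiom eqf.
Proof.
elim=> [a|||f IH|f1 IH1 f2 IH2|f1 IH1 f2 IH2|f1 IH1 f2 IH2]
       [b|||g|g1 g2|g1 g2|g1 g2] /=; try by constructor.
- by apply: (iffP eqP) => [->|[]].
- by apply: (iffP (IH g)) => [->|[]].
- apply: (iffP andP) => [[/IH1 -> /IH2 ->]//|[<- <-]].
  by split; [apply/IH1|apply/IH2].
- apply: (iffP andP) => [[/IH1 -> /IH2 ->]//|[<- <-]].
  by split; [apply/IH1|apply/IH2].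
- apply: (iffP andP) => [[/IH1 -> /IH2 ->]//|[<- <-]].
  by split; [apply/IH1|apply/IH2].
Qed.
HB.instance Definition _ := hasDecEq.Build (formula A) eqfP.
End FormulaEq.

Fixpoint fsat (A : finType) (I : {set A}) (f : formula A) : bool :=
  match f with
  | Fatom a => a \in I
  | Ftrue => true
  | Ffalse => false
  | Fneg g => ~~ fsat I g
  | Fand g h => fsat I g && fsat I h
  | For g h => fsat I g || fsat I h
  | Fimp g h => fsat I g ==> fsat I h
  end.

Fixpoint neg_only (A : Type) (f : formula A) : bool :=
  match f with
  | Fatom _ => false
  | Ftrue | Ffalse | Fneg _ => true
  | Fand g h | For g h | Fimp g h => neg_only g && neg_only h
  end.

(* Rules  A <- B /\ N                                                  *)
(*  (head disjunction, positive body conjunction, negative part N)     *)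
Definition rule (A : Type) := (seq A * seq A * formula A)%type.
Definition rhead (A : Type) (r : rule A) : seq A := r.1.1.
Definition rpbody (A : Type) (r : rule A) : seq A := r.1.2.
Definition rneg (A : Type) (r : rule A) : formula A := r.2.

Definition wf_rule (A : Type) (r : rule A) : bool := neg_only (rneg r).

Section Semantics.
Variable A : finType.
Implicit Types (I J : {set A}) (r : rule A) (P : seq (rule A)).

Definition rsat I r : bool :=
  [&& all (fun a => a \in I) (rpbody r) & fsat I (rneg r)] ==>
  has (fun a => a \in I) (rhead r).

Definition prsat I (r : seq A * seq A) : bool :=
  all (fun a => a \in I) r.2 ==> has (fun a => a \in I) r.1.

Definition reduct P I : seq (seq A * seq A) :=
  [seq (rhead r, rpbody r) | r <- P & fsat I (rneg r)].

Definition pmodel J (Q : seq (seq A * seq A)) : bool := all (prsat J) Q.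

Definition stable_model P I : Prop :=
  pmodel I (reduct P I) /\ forall J, J \proper I -> ~~ pmodel J (reduct P I).

(* weights: [Some w] is the real weight w, [None] is the symbol alpha  *)
(* a program is a finite set of weighted rules (a duplicate-free list) *)
Variable R : realType.
Definition wrule := (option R * rule A)%type.

Definition satisfied_part (Pi : seq wrule) I : seq wrule :=
  [seq wr <- Pi | rsat I wr.2].

Definition inSM (Pi : seq wrule) I : Prop :=
  stable_model [seq wr.2 | wr <- satisfied_part Pi I] I.

Definition wval (alpha : R) (w : option R) : R :=
  if w is Some x then x else alpha.

Definition W (Pi : seq wrule) (alpha : R) I : R :=
  if `[< inSM Pi I >] then
    expR (\sum_(wr <- satisfied_part Pi I) wval alpha wr.1)
  else 0.

Definition Pratio (Pi : seq wrule) I (alpha : R) : R :=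
  W Pi alpha I / \sum_(J : {set A} | `[< inSM Pi J >]) W Pi alpha J.

Definition prob_stable_model (Pi : seq wrule) I : Prop :=
  exists l : R, Pratio Pi I x @[x --> +oo%R] --> l /\ l != 0.

End Semantics.

(* Constants: finType C.  Atoms "c = v": finType A with [const : A ->  *)
(* C]; the atom a stands for  const a = v_a, and Dom(c) is identified   *)
(* with the atoms a such that const a = c.                             *)
(* [prob c]: c is a probabilistic constant.                            *)
(* [p a] = M(c=v) for the atom a = (c = v), c probabilistic.            *)
Section MultiValued.
Variables (R : realType) (C A : finType) (const : A -> C) (prob : pred C).
Variable (p : A -> R).

Definition dom (c : C) : seq A := [seq a <- enum A | const a == c].

Definition valid_PF : Prop :=
  (forall a, prob (const a) -> 0 <= p a <= 1) /\
  (forall c, prob c -> \sum_(a <- dom c) p a = 1).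

Definition valid_rules (Pi : seq (rule A)) : Prop :=
  forall r, r \in Pi -> wf_rule r /\ all (fun a => ~~ prob (const a)) (rhead r).

Definition fact (a : A) : rule A := ([:: a], [::], Ftrue).

Definition pf_rules : seq (wrule A R) :=
  [seq (if (0 < p a) && (p a < 1) then (Some (ln (p a)), fact a)
        else if p a == 1 then (None, fact a)
        else (None, ([::], [:: a], Ftrue)))
  | a <- enum A & prob (const a)].
(* (for valid PF, the last branch is exactly the case p a = 0) *)

(* alpha : _|_ <- c = v1 /\ c = v2  for distinct v1, v2 in Dom(c) *)
Definition uniq_constraints : seq (rule A) :=
  [seq ([::], [:: a1; a2], Ftrue)
  | a1 <- enum A, a2 <- [seq a2 <- enum A | (const a1 == const a2) &&
                                 (enum_rank a1 < enum_rank a2)%N]].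

(* alpha : _|_ <- not (OR_{v in Dom(c)} c = v)  for probabilistic c *)
Definition exist_constraints : seq (rule A) :=
  [seq ([::], [::], Fneg (foldr (fun a f => For (Fatom a) f) Ffalse (dom c)))
  | c <- enum C & prob c].

Definition T (Pi : seq (rule A)) : seq (wrule A R) :=
  undup (pf_rules ++ [seq (None, r) | r <- Pi]
                  ++ [seq (None, r) | r <- uniq_constraints]
                  ++ [seq (None, r) | r <- exist_constraints]).

Definition consistent (I : {set A}) : bool :=
  all (rsat I) uniq_constraints && all (rsat I) exist_constraints.

Definition TC (I : {set A}) : seq (rule A) :=
  [seq fact a | a <- enum I & prob (const a)].

Definition inSM2 (Pi : seq (rule A)) (I : {set A}) : Prop :=
  consistent I /\ stable_model (Pi ++ TC I) I.

End MultiValued.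

(* In LP^MLN the weight of a stable model [I] of [T(Pi)] is
   [exp (w + k * alpha)], where [k] counts the hard (alpha-weighted) rules that
   [I] satisfies.  As [alpha -> +oo] the normalised weights concentrate on the
   stable models with the largest [k]; since [SM''] is nonempty, some stable
   model satisfies every hard rule, so the probabilistic stable models are
   exactly the stable models satisfying all hard rules.  For such an [I], the
   uniqueness and existence constraints hold, so [I] is consistent and the
   declarations with [p = 1] are true in [I]; as every [p] is positive, the
   probabilistic facts of [T(Pi)] true in [I] are exactly [TC(I)], and
   removing the satisfied constraints does not change stable models. *)

From mathcomp Require Import all_boot all_order all_algebra.
From mathcomp Require Import all_classical all_reals all_analysis.
From mathcomp Require Import lra.
Set Implicit Arguments. Unset Strict Implicit. Unset Printing Implicit Defensive.
Import Order.TTheory GRing.Theory Num.Theory.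
Import numFieldNormedType.Exports.
Local Open Scope ring_scope.

Section SoftmaxLimit.
Local Open Scope classical_set_scope.
Variable R : realType.

Lemma cvg_expR_natmulN (d : nat) :
  (0 < d)%N -> expR (- (d%:R * x)) @[x --> +oo] --> (0 : R).
Proof.
case: d => // d _; under eq_fun do rewrite -mulrN expRM_natl.
elim: d => [|d IHd]; first by under eq_fun do rewrite expr1; exact: cvgr_expR.
under eq_fun do rewrite exprS.
by rewrite -(mulr0 (0 : R)); apply: cvgM => //; exact: cvgr_expR.
Qed.

Lemma cvg_expR_gap (c : R) (k N : nat) : (k <= N)%N ->
  expR (c + (k%:R - N%:R) * x) @[x --> +oo] --> (if k == N then expR c else 0).
Proof.
case: eqP => [-> _|/eqP kN kleN].
  by under eq_fun do rewrite subrr mul0r addr0; exact: cvg_cst.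
have gap_gt0 : (0 < N - k)%N by rewrite subn_gt0 ltn_neqAle kN.
under eq_fun do rewrite -opprB -natrB // mulNr expRD.
rewrite -(mulr0 (expR c)); apply: cvgM; first exact: cvg_cst.
exact: cvg_expR_natmulN.
Qed.

Lemma sum_if_expR_gt0 (U : finType) (S P : pred U) (s : U -> R) (J0 : U) :
  S J0 -> P J0 -> 0 < \sum_(J | S J) (if P J then expR (s J) else 0).
Proof.
move=> SJ0 PJ0; rewrite (bigD1 J0) //= PJ0 ltr_pwDl ?expR_gt0 //.
by apply: sumr_ge0 => J _; case: ifP => _; rewrite ?expR_ge0.
Qed.

Lemma cvg_softmax (U : finType) (S : pred U) (s : U -> R) (k : U -> nat)
    (N : nat) (J0 : U) :
  (forall J, S J -> (k J <= N)%N) -> S J0 -> k J0 = N -> forall I, S I ->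
  expR (s I + (k I)%:R * x) / \sum_(J | S J) expR (s J + (k J)%:R * x)
    @[x --> +oo] -->
  (if k I == N then expR (s I) else 0) /
    \sum_(J | S J) (if k J == N then expR (s J) else 0).
Proof.
move=> kleN SJ0 kJ0 I SI.
pose e J (x : R) := expR (s J + ((k J)%:R - N%:R) * x).
have scale J x : expR (s J + (k J)%:R * x) = e J x * expR (N%:R * x).
  by rewrite /e -expRD mulrBl addrA subrK.
have limit_gt0 := sum_if_expR_gt0 s (P := fun J => k J == N) SJ0 (introT eqP kJ0).
have -> : (fun x => expR (s I + (k I)%:R * x) /
                   \sum_(J | S J) expR (s J + (k J)%:R * x)) =
          (fun x => e I x / \sum_(J | S J) e J x).
  apply/funext => x; rewrite scale (eq_bigr _ (fun J _ => scale J x)).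
  by rewrite -big_distrl /= -mulf_div divff ?gt_eqF ?expR_gt0 // mulr1.
apply: cvgM; first exact: cvg_expR_gap (kleN I SI).
apply: cvgV; first by rewrite gt_eqF.
apply: cvg_big => [|J SJ]; first exact: add_continuous.
exact: cvg_expR_gap (kleN J SJ).
Qed.

End SoftmaxLimit.

Section LPMLN.
Local Open Scope classical_set_scope.
Variables (A : finType) (R : realType).
Implicit Types (Pi : seq (wrule A R)) (I J : {set A}).

Definition hard_rules Pi : seq (wrule A R) := [seq wr <- Pi | wr.1 == None].

Definition hard_count Pi I : nat := count (fun wr => rsat I wr.2) (hard_rules Pi).

Definition sat_hard Pi I : bool := all (fun wr => rsat I wr.2) (hard_rules Pi).

Definition soft_weight Pi I : R := \sum_(wr <- Pi | rsat I wr.2) odflt 0 wr.1.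

Lemma sat_hardP Pi I :
  reflect (forall wr, wr \in Pi -> wr.1 = None -> rsat I wr.2) (sat_hard Pi I).
Proof.
apply: (iffP allP) => [hard wr wrPi wrN|hard wr].
  by apply: hard; rewrite mem_filter wrN eqxx.
by rewrite mem_filter => /andP[/eqP wrN wrPi]; exact: hard.
Qed.

Lemma sum_wval_satisfied Pi I alpha :
  \sum_(wr <- satisfied_part Pi I) wval alpha wr.1 =
  soft_weight Pi I + (hard_count Pi I)%:R * alpha.
Proof.
rewrite /satisfied_part /soft_weight /hard_count count_filter big_filter.
elim: Pi => [|[w r] Pi IH]; first by rewrite !big_nil mul0r addr0.
rewrite !big_cons /=; case: (rsat I r); rewrite IH //.
by case: w => [x|] /=; rewrite ?add1n ?mulrSr; lra.
Qed.

Lemma W_stable Pi alpha I : inSM Pi I ->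
  W Pi alpha I = expR (soft_weight Pi I + (hard_count Pi I)%:R * alpha).
Proof. by move=> SI; rewrite /W asboolT // sum_wval_satisfied. Qed.

Lemma cvg_Pratio_stable Pi J0 I :
  inSM Pi J0 -> sat_hard Pi J0 -> inSM Pi I ->
  Pratio Pi I x @[x --> +oo] -->
  (if sat_hard Pi I then expR (soft_weight Pi I) else 0) /
    \sum_(J | `[< inSM Pi J >])
      (if sat_hard Pi J then expR (soft_weight Pi J) else 0).
Proof.
move=> SJ0 hJ0 SI.
have -> : Pratio Pi I = fun x =>
    expR (soft_weight Pi I + (hard_count Pi I)%:R * x) /
    \sum_(J | `[< inSM Pi J >])
      expR (soft_weight Pi J + (hard_count Pi J)%:R * x).
  apply/funext => x; rewrite /Pratio W_stable //; congr (_ / _).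
  by apply: eq_bigr => J /asboolP; exact: W_stable.
rewrite /sat_hard all_count.
under eq_bigr => J _ do rewrite all_count.
apply: cvg_softmax (asboolT SJ0) _ _ (asboolT SI) => [J _|].
  exact: count_size.
by apply/eqP; rewrite -all_count.
Qed.

Theorem prob_stable_modelP Pi :
  (exists J, inSM Pi J /\ sat_hard Pi J) ->
  forall I, prob_stable_model Pi I <-> inSM Pi I /\ sat_hard Pi I.
Proof.
case=> J0 [SJ0 hJ0] I; have [SI|nSI] := pselect (inSM Pi I); last first.
  split=> [[l []]|[]//].
  have -> : Pratio Pi I = fun=> 0.
    by apply/funext => x; rewrite /Pratio /W asboolF ?mul0r.
  by move=> cvg_l; rewrite (cvg_unique (@Rhausdorff R) cvg_l (cvg_cst 0)) eqxx.
have cvg_P := cvg_Pratio_stable SJ0 hJ0 SI.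
have denom_gt0 := sum_if_expR_gt0 (soft_weight Pi)
  (S := fun J => `[< inSM Pi J >]) (asboolT SJ0) hJ0.
split=> [[l [cvg_l]]|[_ hI]].
  rewrite (cvg_unique (@Rhausdorff R) cvg_l cvg_P).
  by case: ifP => [//|_]; rewrite mul0r eqxx.
eexists; split; first exact: cvg_P.
by rewrite hI mulf_neq0 ?invr_eq0 ?gt_eqF ?expR_gt0.
Qed.

End LPMLN.

Section StableModels.
Variable A : finType.
Implicit Types (I J : {set A}) (r : rule A) (P Q : seq (rule A)).

Definition rsat_reduct I J r : bool :=
  fsat I (rneg r) ==> prsat J (rhead r, rpbody r).

Lemma pmodel_reduct P I J : pmodel J (reduct P I) = all (rsat_reduct I J) P.
Proof. by rewrite /pmodel /reduct all_map all_filter. Qed.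

Lemma rsat_reduct_id I r : rsat_reduct I I r = rsat I r.
Proof.
by rewrite /rsat_reduct /rsat /prsat /=; case: (all _ _); case: (fsat _ _).
Qed.

Lemma rsat_fact I a : rsat I (fact a) = (a \in I).
Proof. by rewrite /rsat /= orbF. Qed.

Lemma fsat_disj I s :
  fsat I (foldr (fun a f => For (Fatom a) f) Ffalse s) = has (mem I) s.
Proof. by elim: s => //= a s ->. Qed.

Lemma stable_model_rsat P I : stable_model P I -> all (rsat I) P.
Proof.
by case=> + _; rewrite pmodel_reduct; apply: sub_all => r; rewrite rsat_reduct_id.
Qed.

Lemma eq_stable_model P1 P2 I : P1 =i P2 ->
  stable_model P1 I <-> stable_model P2 I.
Proof.
move=> eqP12; have eq_pmodel J : pmodel J (reduct P1 I) = pmodel J (reduct P2 I).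
  by rewrite !pmodel_reduct; exact: eq_all_r.
by rewrite /stable_model; split=> -[modI minI]; split=> [|J /minI];
  rewrite ?eq_pmodel // -?eq_pmodel.
Qed.

Lemma rsat_reduct_constraint I J r :
  rhead r = [::] -> rsat I r -> J \subset I -> rsat_reduct I J r.
Proof.
rewrite /rsat /rsat_reduct /prsat /= => -> /= satI /fintype.subsetP subJI.
apply/implyP=> negI; apply/implyP=> bodyJ; move: satI; rewrite negI andbT.
by rewrite (sub_all _ bodyJ) // => a /subJI.
Qed.

Lemma stable_model_cat_constraints I P Q :
  all (rsat I) Q -> all (fun r => rhead r == [::]) Q ->
  stable_model (P ++ Q) I <-> stable_model P I.
Proof.
move=> /allP satQ /allP headQ.
have eq_pmodel J : J \subset I ->
    pmodel J (reduct (P ++ Q) I) = pmodel J (reduct P I).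
  move=> subJI; rewrite !pmodel_reduct all_cat.
  suff -> : all (rsat_reduct I J) Q by rewrite andbT.
  apply/allP => r rQ.
  by apply: rsat_reduct_constraint; [apply/eqP/headQ|apply: satQ|].
rewrite /stable_model eq_pmodel //.
by split=> -[modI minI]; split=> // J ltJI; move/minI: (ltJI);
  rewrite eq_pmodel // proper_sub.
Qed.

End StableModels.

Section Translation.
Variables (R : realType) (C A : finType) (const : A -> C) (prob : pred C).
Variables (p : A -> R) (Pi : seq (rule A)).
Hypothesis PF_valid : valid_PF const prob p.
Hypothesis p_gt0 : forall a, prob (const a) -> 0 < p a.
Implicit Types (I : {set A}) (r : rule A) (wr : wrule A R).

Local Notation TPi := (T const prob p Pi).
Local Notation U := (uniq_constraints const).
Local Notation E := (exist_constraints const prob).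

Definition pf_rule a : wrule A R :=
  if (0 < p a) && (p a < 1) then (Some (ln (p a)), fact a)
  else if p a == 1 then (None, fact a)
  else (None, ([::], [:: a], Ftrue)).

Lemma pf_rule_fact a : prob (const a) -> (pf_rule a).2 = fact a.
Proof.
move=> pa; rewrite /pf_rule p_gt0 //=; case: ltP => //= pa_ge1.
have /andP[_ pa_le1] := PF_valid.1 a pa.
by rewrite eq_le pa_le1 pa_ge1.
Qed.

Lemma pf_rule_hard a : prob (const a) -> (pf_rule a).1 = None -> p a = 1.
Proof.
move=> pa; rewrite /pf_rule p_gt0 //=; case: ltP => //= pa_ge1.
have /andP[_ pa_le1] := PF_valid.1 a pa.
by rewrite eq_le pa_le1 pa_ge1 => _; apply/le_anti/andP.
Qed.

Lemma mem_T wr : (wr \in TPi) =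
  [|| wr \in [seq pf_rule a | a <- enum A & prob (const a)],
      wr \in [seq (None, r) | r <- Pi],
      wr \in [seq (None, r) | r <- U] |
      wr \in [seq (None, r) | r <- E]].
Proof. by rewrite mem_undup !mem_cat. Qed.

Lemma constraints_head_nil : all (fun r => rhead r == [::]) (U ++ E).
Proof.
rewrite all_cat; apply/andP; split; apply/allP => r.
  by case/allpairsPdep => a1 [a2 [_ _ ->]].
by case/mapP => c _ ->.
Qed.

Lemma prob1_dom_eq a b :
  prob (const a) -> p a = 1 -> const b = const a -> b = a.
Proof.
move=> pa pa1 cba; apply/eqP/negPn/negP => nba.
have := PF_valid.2 _ pa; rewrite /dom big_filter big_enum_cond /=.
rewrite (bigD1 a) //= (bigD1 b) /=; last by rewrite cba eqxx.
have rest_ge0 : 0 <= \sum_(i | (const i == const a) && (i != a) && (i != b)) p i.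
  apply: sumr_ge0 => i /andP[/andP[/eqP cia _] _].
  by have /andP[] := PF_valid.1 i (etrans (congr1 prob cia) pa).
have := p_gt0 (etrans (congr1 prob cba) pa); lra.
Qed.

Lemma prob1_mem I a :
  prob (const a) -> p a = 1 -> consistent const prob I -> a \in I.
Proof.
move=> pa pa1 /andP[_ /allP satE].
have /satE : ([::], [::], Fneg (foldr (fun a f => For (Fatom a) f) Ffalse
                                      (dom const (const a)))) \in E.
  by apply: map_f; rewrite mem_filter pa mem_enum.
rewrite /rsat /= fsat_disj implybF negbK => /hasP[b].
by rewrite mem_filter => /andP[/eqP /(prob1_dom_eq pa pa1) ->].
Qed.

Lemma sat_hard_T_consistent I : sat_hard TPi I -> consistent const prob I.
Proof.
move/sat_hardP => hard; apply/andP; split; apply/allP => r rUE;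
  by apply: (hard (None, r)); rewrite // mem_T (map_f _ rUE) !orbT.
Qed.

Lemma consistent_sat_hard_T I :
  consistent const prob I -> all (rsat I) Pi -> sat_hard TPi I.
Proof.
move=> cons /allP satPi; have /andP[/allP satU /allP satE] := cons.
apply/sat_hardP => wr; rewrite mem_T => /or4P[] /mapP[x xin ->] //= hard.
- move: xin; rewrite mem_filter mem_enum andbT => px.
  by rewrite pf_rule_fact // rsat_fact prob1_mem // pf_rule_hard.
- exact: satPi.
- exact: satU.
- exact: satE.
Qed.

Lemma satisfied_T_mem I : sat_hard TPi I ->
  [seq wr.2 | wr <- satisfied_part TPi I] =i (Pi ++ TC const prob I) ++ (U ++ E).
Proof.
move=> /sat_hardP hard r; rewrite !mem_cat; apply/mapP/idP => [[wr]|].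
  rewrite mem_filter mem_T => /andP[satI] /or4P[] /mapP[x xin eqwr] ->; subst wr.
  - move: xin satI; rewrite mem_filter mem_enum andbT => px.
    rewrite pf_rule_fact // rsat_fact => xI.
    have xTC : x \in [seq a <- enum I | prob (const a)].
      by rewrite mem_filter px mem_enum.
    by rewrite (map_f _ xTC) orbT.
  - by rewrite xin.
  - by rewrite xin !orbT.
  - by rewrite xin !orbT.
have hard_mem : (None, r) \in TPi ->
    exists2 wr, wr \in satisfied_part TPi I & r = wr.2.
  by move=> rT; exists (None, r); rewrite // mem_filter rT andbT; exact: hard.
case/orP => [/orP[rPi|]|/orP[rU|rE]].
- by apply: hard_mem; rewrite mem_T (map_f _ rPi) orbT.
- case/mapP => a; rewrite mem_filter mem_enum => /andP[pa aI] ->.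
  have aPF : a \in [seq a <- enum A | prob (const a)].
    by rewrite mem_filter pa mem_enum.
  exists (pf_rule a); last by rewrite pf_rule_fact.
  by rewrite mem_filter pf_rule_fact // rsat_fact aI mem_T (map_f _ aPF).
- by apply: hard_mem; rewrite mem_T (map_f _ rU) !orbT.
- by apply: hard_mem; rewrite mem_T (map_f _ rE) !orbT.
Qed.

Lemma inSM_T I : consistent const prob I -> sat_hard TPi I ->
  inSM TPi I <-> stable_model (Pi ++ TC const prob I) I.
Proof.
move=> cons hard; rewrite /inSM (eq_stable_model _ (satisfied_T_mem hard)).
by apply: stable_model_cat_constraints constraints_head_nil; rewrite all_cat.
Qed.

Lemma inSM_sat_hard_T I :
  inSM TPi I /\ sat_hard TPi I <-> inSM2 const prob Pi I.
Proof.
split=> [[SI hard]|[cons SI]].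
  have cons := sat_hard_T_consistent hard.
  by split; last exact/(inSM_T cons hard).
have hard : sat_hard TPi I.
  apply: consistent_sat_hard_T cons _.
  by move: (stable_model_rsat SI); rewrite all_cat => /andP[].
by split; first exact/(inSM_T cons hard).
Qed.

End Translation.

Theorem lemma8 (R : realType) (C A : finType) (const : A -> C)
  (prob : pred C) (p : A -> R) (Pi : seq (rule A)) :
  valid_PF const prob p ->
  valid_rules const prob Pi ->
  (exists I : {set A}, inSM2 const prob Pi I) ->
  (forall a : A, prob (const a) -> 0 < p a) ->
  forall I : {set A},
    prob_stable_model (T const prob p Pi) I <-> inSM2 const prob Pi I.
Proof.
move=> PF_valid _ [J0 J0_SM2] p_gt0 I.
have SM2_T := inSM_sat_hard_T Pi PF_valid p_gt0.
rewrite -SM2_T; apply: prob_stable_modelP.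
by exists J0; apply/SM2_T.
Qed.
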